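(* Let $G$ be a connected unicyclic graph (a connected graph with exactly one cycle) of order $n\geq 3$ and maximum degree $\Delta(G)$, and let $k$ be an integer with $3\leq k\leq n$. If $G$ satisfies all of the following: (i) $G$ has at most two vertices of degree $\Delta(G)$; (ii) every vertex of degree $\Delta(G)$ lies on the unique cycle of $G$; (iii) if there are two vertices of degree $\Delta(G)$, they are adjacent in $G$; then $px_k(G)=\Delta(G)-1$. Otherwise, $px_k(G)=\Delta(G)$.
   Context: All graphs are finite, simple, undirected and connected. An edge-coloring of a graph assigns a color to each edge (adjacent edges may receive the same color). A tree in an edge-colored graph is proper if any two adjacent edges of the tree receive different colors. For $S\subseteq V(G)$, an $S$-tree is a subgraph of $G$ that is a tree containing all vertices of $S$. For a connected graph $G$ of order $n$ and an integer $k$ with $2\le k\le n$, an edge-coloring of $G$ is a $k$-proper coloring if for every set $S$ of $k$ vertices of $G$ there exists a proper $S$-tree in $G$. The $k$-proper index $px_k(G)$ is the minimum number of colors used in a $k$-proper coloring of $G$. *)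

From mathcomp Require Import all_boot.
Set Implicit Arguments. Unset Strict Implicit. Unset Printing Implicit Defensive.

Section Graphs.
Variable T : finType.

Definition simple_graph (g : rel T) : Prop := symmetric g /\ irreflexive g.

Definition connected_graph (g : rel T) : Prop := forall x y : T, connect g x y.

Definition edges (g : rel T) : {set {set T}} :=
  [set [set p.1; p.2] | p : T * T & g p.1 p.2].

Definition deg (g : rel T) (v : T) : nat := #|[set u | g v u]|.

Definition maxdeg (g : rel T) : nat := \max_(v : T) deg g v.

Definition is_cycle (r : rel T) (c : seq T) : bool :=
  [&& 2 < size c, uniq c & cycle r c].

Definition cycle_edges (c : seq T) : {set {set T}} :=
  [set [set x; next c x] | x in c].

(* connected and with exactly one cycle (cycles identified by their edge sets) *)
Definition unicyclic (g : rel T) : Prop :=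
  connected_graph g /\
  exists c, is_cycle g c /\
    forall c', is_cycle g c' -> cycle_edges c' = cycle_edges c.

Definition on_cycle (g : rel T) (v : T) : Prop :=
  exists c, is_cycle g c && (v \in c).

Definition edge_rel (F : {set {set T}}) : rel T := fun x y => [set x; y] \in F.

Definition is_subtree (g : rel T) (V : {set T}) (F : {set {set T}}) : Prop :=
  [/\ F \subset edges g,
      (forall e, e \in F -> e \subset V),
      V != set0,
      (forall x y, x \in V -> y \in V -> connect (edge_rel F) x y)
    & forall c, ~~ is_cycle (edge_rel F) c].

Definition proper_tree (m : nat) (col : {set T} -> 'I_m) (F : {set {set T}}) : Prop :=
  forall x y z, y != z -> edge_rel F x y -> edge_rel F x z ->
    col [set x; y] != col [set x; z].

Definition k_proper_coloring (g : rel T) (k m : nat) (col : {set T} -> 'I_m) : Prop :=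
  forall S : {set T}, #|S| = k ->
    exists V F, [/\ is_subtree g V F, S \subset V & proper_tree col F].

Definition is_px (g : rel T) (k p : nat) : Prop :=
  (exists col : {set T} -> 'I_p, k_proper_coloring g k col) /\
  (forall (m : nat) (col : {set T} -> 'I_m), k_proper_coloring g k col -> p <= m).

End Graphs.

From mathcomp Require Import all_boot zify.
Set Implicit Arguments. Unset Strict Implicit. Unset Printing Implicit Defensive.

(* Deleting an edge of the unique cycle leaves a spanning tree, and a forest of
   maximum degree p has a proper p-edge-coloring (peel off a leaf edge); such a
   tree serves every vertex set.  Hence Delta colors suffice, and Delta - 1
   when one cycle edge contains every vertex of degree Delta, which is what
   (i)-(iii) express.
   Conversely, if a subtree contains both ends of an edge xy but not xy, then
   xy is a cycle edge and the subtree contains all the other cycle edges.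
   Applied to subtrees through suitable triples of vertices (padded to k
   vertices), this shows that the non-cycle edges at a vertex have distinct
   colors, and cannot account for the colors of both cycle edges there: so
   Delta - 1 colors are needed.  With only Delta - 1 colors every vertex of
   degree Delta has a cycle edge colored like another of its edges, which rules
   out two non-adjacent such vertices as well as three of them: (i)-(iii) hold. *)

Section Finsets.
Variable T : finType.
Implicit Types (a b c d : T) (A : {set T}).

Lemma set2C a b : [set a; b] = [set b; a].
Proof. exact: setUC. Qed.

Lemma eq_set2 a b c d : [set a; b] = [set c; d] ->
  (a = c /\ b = d) \/ (a = d /\ b = c).
Proof.
move=> E.
have ha : a \in [set c; d] by rewrite -E set21.
have hb : b \in [set c; d] by rewrite -E set22.
have hc : c \in [set a; b] by rewrite E set21.
have hd : d \in [set a; b] by rewrite E set22.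
move: ha hb hc hd; rewrite !inE.
case/orP=> /eqP ea; case/orP=> /eqP eb; subst.
- by move=> _ /orP[] /eqP ->; left.
- by left.
- by right.
- by move=> /orP[] /eqP -> _; right.
Qed.

Lemma set2_neq a b c : a != b -> b != c -> [set a; b] != [set a; c].
Proof.
move=> ab bc; apply/eqP => /eq_set2 [[_ E]|[_ E]].
  by rewrite E eqxx in bc.
by rewrite E eqxx in ab.
Qed.

Lemma edge_rel_sym (F : {set {set T}}) : symmetric (edge_rel F).
Proof. by move=> x y; rewrite /edge_rel set2C. Qed.

Lemma card_set3_le a b c : #|[set a; b; c]| <= 3.
Proof.
apply: leq_trans (leq_card_setU _ _) _.
by rewrite cards2 cards1; case: (a != b).
Qed.

Lemma exists_notin A : #|A| < #|T| -> exists x, x \notin A.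
Proof.
move=> ltA; have /subsetPn [x _ xA] : ~~ ([set: T] \subset A).
  by apply/negP => /subset_leq_card; rewrite cardsT leqNgt ltA.
by exists x.
Qed.

Lemma exists_superset_card A k : #|A| <= k <= #|T| ->
  exists2 S : {set T}, A \subset S & #|S| = k.
Proof.
case/andP; elim: k => [|k IH] Ak kT.
  by exists A => //; apply/eqP; rewrite -leqn0.
case: (ltngtP #|A| k.+1) Ak => // [ltAk _ | eqAk _]; last by exists A.
have [S AS cS] := IH ltAk (ltnW kT).
have [x xS] : exists x, x \notin S by apply: exists_notin; rewrite cS.
exists (x |: S); first exact: subset_trans AS (subsetUr _ _).
by rewrite cardsU1 xS cS.
Qed.

End Finsets.

Section CyclicSequences.
Variable T : finType.

Lemma prev_head (x : T) p : uniq (x :: p) -> prev (x :: p) x = last x p.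
Proof.
move=> U; rewrite prev_nth mem_head /=.
have xp : x \notin p by case/andP: U.
rewrite (memNindex xp).
by have := nth_last x (x :: p); rewrite /= => ->.
Qed.

Lemma next_last (x : T) p : uniq (x :: p) -> next (x :: p) (last x p) = x.
Proof. by move=> U; rewrite -prev_head // next_prev. Qed.

Lemma next_neq_prev (c : seq T) v : uniq c -> 2 < size c -> v \in c ->
  next c v != prev c v.
Proof.
move=> Uc sc; case/rot_to=> i q E.
rewrite -(next_rot i Uc) -(prev_rot i Uc) E.
have U : uniq (v :: q) by rewrite -E rot_uniq.
have : 2 < size (v :: q) by rewrite -E size_rot.
rewrite prev_head //; case: q U {E} => [|a [|b q]] // /andP [_ /andP [abq _]] _.
by rewrite /= eqxx; apply: contraNneq abq => ->; apply: mem_last.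
Qed.

Lemma connect_uniq_path (r : rel T) x y : connect r x y ->
  exists p, [/\ path r x p, uniq (x :: p) & last x p = y].
Proof. by case/connectP=> p pr ->; case: (shortenP pr) => p' pr' U' _; exists p'. Qed.

Lemma sub_uniq_path (r r' : rel T) x p : uniq (x :: p) -> path r x p ->
  (forall a b, a != last x p -> r a b -> r' a b) -> path r' x p.
Proof.
elim: p x => //= y p IH x /andP [xyp U] /andP [rxy pr] rr'.
rewrite IH // andbT; apply: rr' rxy.
by apply: contraNneq xyp => ->; rewrite mem_last.
Qed.

Lemma mem_cycle_edges (c : seq T) e z : e \in cycle_edges c -> z \in e -> z \in c.
Proof. by case/imsetP=> w wc -> /set2P [] ->; rewrite ?mem_next. Qed.

Lemma cycle_edges_next (c : seq T) z : z \in c -> [set z; next c z] \in cycle_edges c.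
Proof. by move=> zc; apply/imsetP; exists z. Qed.

Lemma cycle_edges_head x y (p : seq T) : [set x; y] \in cycle_edges (x :: y :: p).
Proof. by apply/imsetP; exists x; rewrite ?mem_head //= eqxx. Qed.

Lemma cycle_edges_last x (p : seq T) : uniq (x :: p) ->
  [set last x p; x] \in cycle_edges (x :: p).
Proof. by move=> U; rewrite -{2}(next_last U) cycle_edges_next ?mem_last. Qed.

Lemma mem_cycle_edges_path (r : rel T) x p e : path r x p -> uniq (x :: p) ->
  e \in cycle_edges (x :: p) ->
  e = [set last x p; x] \/ exists a b, r a b /\ e = [set a; b].
Proof.
move=> pr U /imsetP [z zp ->].
pose r' a b := r a b || (a == last x p) && (b == x).
have cyc : cycle r' (x :: p).
  rewrite /= rcons_path (@sub_path _ r r') ?[r' _ _]/r' ?eqxx ?orbT //.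
  by move=> a b rab; rewrite /r' rab.
have := next_cycle cyc zp; rewrite /r' => /orP [rz|/andP [/eqP -> /eqP ->]].
  by right; exists z, (next (x :: p) z).
by left.
Qed.

End CyclicSequences.

Section Forest.
Variables (T : finType) (F : {set {set T}}).
Local Notation r := (edge_rel F).
Hypothesis Firr : irreflexive r.
Hypothesis Facyc : forall c, ~~ is_cycle r c.

Lemma forest_path_notin x q y z : path r x (rcons q y) -> uniq (x :: rcons q y) ->
  r y z -> z != last x q -> z \notin x :: rcons q y.
Proof.
move=> pq U ryz zw; apply/negP => zin.
have [p1 [p2 E]] : exists p1 p2, x :: rcons q y = p1 ++ z :: p2.
  by case/splitPr: zin => p1 p2; exists p1, p2.
have sr : sorted r (x :: rcons q y) := pq.
rewrite E in sr U.
have pr2 : path r z p2 := (cat_sorted2 sr).2.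
have U2 : uniq (z :: p2) by move: U; rewrite cat_uniq => /and3P [].
have L : last z p2 = y by have := congr1 (last x) E; rewrite last_cat /= last_rcons.
have : 1 < size p2.
  case: p2 E {sr U pr2 U2} L => [|a [|b p2]] //= E L.
    by move: ryz; rewrite -L Firr.
  have Eq : x :: q = rcons p1 z.
    by apply: (@rcons_injl _ y); rewrite rcons_cons E L -cats1 cat_rcons.
  by move: zw; rewrite /= -(last_rcons x p1 z) -Eq eqxx.
move=> p2gt1; case/negP: (Facyc (z :: p2)).
by apply/and3P; split => //; rewrite /= rcons_path pr2 L ryz.
Qed.

Lemma forest_leaf x y : r x y -> exists u v, r u v /\ forall z, r v z -> z = u.
Proof.
move=> rxy.
suff: forall n q y, #|T| - size q <= n -> path r x (rcons q y) ->
    uniq (x :: rcons q y) -> exists u v, r u v /\ forall z, r v z -> z = u.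
  move/(_ #|T| [::] y); apply=> //=; [lia | by rewrite rxy |].
  by rewrite andbT inE; apply: contraTneq rxy => ->; rewrite Firr.
elim=> [|n IH] q y' hn pq U.
  have := max_card (mem (x :: rcons q y')); rewrite (card_uniqP U) /= size_rcons.
  by move: hn; rewrite leqn0 subn_eq0 => le_T_q /leq_trans/(_ le_T_q); lia.
set w := last x q.
have rwy : r w y' by move: pq; rewrite rcons_path => /andP [].
case: (boolP [exists z, r y' z && (z != w)]) => [/existsP [z /andP [ryz zw]]|].
  apply: (IH (rcons q y') z).
  - by move: hn; rewrite size_rcons; lia.
  - by rewrite rcons_path pq last_rcons.
  - by rewrite -rcons_cons rcons_uniq forest_path_notin.
move/existsPn=> leaf; exists w, y'; split => // z ryz.
by apply/eqP; move: (leaf z); rewrite ryz /= negbK.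
Qed.

End Forest.

Lemma proper_tree_extend_leaf (T : finType) p (col : {set T} -> 'I_p)
    (F : {set {set T}}) u v i :
  irreflexive (edge_rel F) -> edge_rel F u v -> (forall z, edge_rel F v z -> z = u) ->
  proper_tree col (F :\ [set u; v]) ->
  i \notin [set col [set u; z] | z in [set z | edge_rel (F :\ [set u; v]) u z]] ->
  proper_tree (fun e => if e == [set u; v] then i else col e) F.
Proof.
set e := [set u; v] => Firr ruv leaf colP iu.
have fresh a b c : b != c -> edge_rel F a c ->
    [set a; b] = e -> [set a; c] != e -> i != col [set a; c].
  move=> bc rac Eb Nc; case: (eq_set2 Eb) => [[ea eb]|[ea eb]]; subst a b.
    apply: contraNneq iu => ->; apply/imsetP; exists c => //.
    by rewrite inE /edge_rel in_setD1 Nc.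
  by rewrite (leaf _ rac) eqxx in bc.
move=> a b c bc rab rac; have ab : a != b by apply: contraTneq rab => ->; rewrite Firr.
case: ifP => [/eqP Eb|/negbT Nb]; case: ifP => [/eqP Ec|/negbT Nc].
- by move: (set2_neq ab bc); rewrite Eb Ec eqxx.
- exact: (fresh a b c).
- by rewrite eq_sym; apply: (fresh a c b); rewrite // eq_sym.
- by apply: colP; rewrite // /edge_rel in_setD1 ?Nb ?Nc.
Qed.

(* Remove a leaf edge uv, color the rest by induction, and give uv a color not
   used at u: at most p - 1 other edges meet u, and none other meets v. *)
Lemma forest_proper_coloring (T : finType) p (F : {set {set T}}) : 0 < p ->
  irreflexive (edge_rel F) -> (forall c, ~~ is_cycle (edge_rel F) c) ->
  (forall x, deg (edge_rel F) x <= p) ->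
  exists col : {set T} -> 'I_p, proper_tree col F.
Proof.
move=> p_gt0; have [n] := ubnP #|F|; elim: n F => // n IH F ltFn Firr Facyc degF.
case: (pickP (fun xy : T * T => edge_rel F xy.1 xy.2)) => [[x y] /= rxy | noedge];
  last by exists (fun=> Ordinal p_gt0) => x y z _ rxy; move: (noedge (x, y)); rewrite /= rxy.
have [u [v [ruv leaf]]] := forest_leaf Firr Facyc rxy.
set F' := F :\ [set u; v].
have F'F a b : edge_rel F' a b -> edge_rel F a b by rewrite /edge_rel in_setD1 => /andP [].
have [col colP] : exists col : {set T} -> 'I_p, proper_tree col F'.
  apply: IH.
  - by move: ltFn; rewrite (cardsD1 [set u; v] F) [_ \in F]ruv.
  - by move=> a; apply/negP => /F'F; rewrite Firr.
  - move=> c; apply: contra (Facyc c) => /and3P [? ? cyc].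
    by apply/and3P; split=> //; apply: sub_cycle cyc.
  - move=> a; apply: leq_trans (degF a); apply: subset_leq_card.
    by apply/subsetP => b; rewrite !inE; apply: F'F.
have [i iu] : exists i, i \notin [set col [set u; z] | z in [set z | edge_rel F' u z]].
  apply: exists_notin; rewrite card_ord; apply: leq_ltn_trans (leq_imset_card _ _) _.
  have sub : [set z | edge_rel F' u z] \subset [set z | edge_rel F u z] :\ v.
    apply/subsetP => z; rewrite !inE => h; rewrite (F'F _ _ h) andbT.
    by apply: contraTneq h => ->; rewrite /edge_rel in_setD1 eqxx.
  apply: leq_ltn_trans (subset_leq_card sub) _.
  by have := degF u; rewrite /deg (cardsD1 v) inE ruv.
by exists (fun e => if e == [set u; v] then i else col e); apply: proper_tree_extend_leaf.
Qed.

Section Unicyclic.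
Variables (T : finType) (g : rel T).
Hypotheses (gsym : symmetric g) (girr : irreflexive g).
Variable c0 : seq T.
Hypothesis c0_cycle : is_cycle g c0.
Hypothesis c0_unique : forall c, is_cycle g c -> cycle_edges c = cycle_edges c0.
Local Notation CE := (cycle_edges c0).

Lemma adj_neq x y : g x y -> x != y.
Proof. by apply: contraTneq => ->; rewrite girr. Qed.

Lemma mem_edges x y : ([set x; y] \in edges g) = g x y.
Proof.
apply/imsetP/idP => [[[a b]] | gxy]; last by exists (x, y); rewrite ?inE.
by rewrite inE /= => gab /eq_set2 [[-> ->]|[-> ->]]; rewrite // gsym.
Qed.

Lemma edges_set2 e : e \in edges g -> exists x y, g x y /\ e = [set x; y].
Proof. by case/imsetP=> [[a b]]; rewrite inE /= => gab ->; exists a, b. Qed.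

Lemma c0_uniq : uniq c0. Proof. by case/and3P: c0_cycle. Qed.

Lemma c0_closed_walk : cycle g c0. Proof. by case/and3P: c0_cycle. Qed.

Lemma closed_path_cycle_edges (r : rel T) x p : subrel r g ->
  path r x p -> uniq (x :: p) -> 1 < size p -> g (last x p) x ->
  cycle_edges (x :: p) = CE.
Proof.
move=> rg pr U sp gl; apply: c0_unique; apply/and3P; split => //.
by rewrite /= rcons_path (sub_path rg pr) gl.
Qed.

Lemma cycle_edge_nbr v w : [set v; w] \in CE -> w = next c0 v \/ w = prev c0 v.
Proof.
case/imsetP=> z zc /eq_set2 [[-> ->]|[-> ->]]; first by left.
by right; rewrite prev_next // c0_uniq.
Qed.

Lemma cycle_adj_cycle_edge u v : u \in c0 -> v \in c0 -> g u v -> [set u; v] \in CE.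
Proof.
move=> uc vc guv.
pose R a b := g a b && ([set a; b] \in CE).
case Ruv: (R u v); first by case/andP: Ruv.
have cR : cycle R c0.
  apply: cycle_from_next; first exact: c0_uniq.
  by move=> z zc; rewrite /R (next_cycle c0_closed_walk zc) cycle_edges_next.
have [p [pr U L]] := connect_uniq_path (connect_cycle cR uc vc).
have sp : 1 < size p.
  case: p pr U L => [|z [|w p]] //= => [_ _ E|/andP [Ruz _] _ E].
    by move: guv; rewrite E girr.
  by rewrite E Ruv in Ruz.
have E : cycle_edges (u :: p) = CE.
  by apply: (@closed_path_cycle_edges R) => //; [move=> a b /andP [] | rewrite L gsym].
by rewrite -E set2C -L cycle_edges_last.
Qed.

Lemma on_cycle_mem v : on_cycle g v <-> v \in c0.
Proof.
split=> [[c /andP [ic vc]]|vc]; last by exists c0; rewrite c0_cycle.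
have := cycle_edges_next vc; rewrite (c0_unique ic) => /mem_cycle_edges.
by apply; rewrite set21.
Qed.

Lemma cycle_deg_ge2 v : v \in c0 -> 2 <= deg g v.
Proof.
move=> vc; have c0_size : 2 < size c0 by case/and3P: c0_cycle.
have <- : #|[set next c0 v; prev c0 v]| = 2 by rewrite cards2 next_neq_prev ?c0_uniq.
apply: subset_leq_card; apply/subsetP => y /set2P [] ->; rewrite inE.
  exact: next_cycle c0_closed_walk vc.
by rewrite gsym; apply: prev_cycle c0_closed_walk vc.
Qed.

Section Subtree.
Variables (V : {set T}) (F : {set {set T}}).
Hypothesis tree : is_subtree g V F.

Lemma subtree_adj x y : edge_rel F x y -> g x y.
Proof. by case: tree => sF _ _ _ _ /(subsetP sF); rewrite mem_edges. Qed.

Lemma subtree_mem x y : edge_rel F x y -> (x \in V) * (y \in V).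
Proof.
case: tree => _ FV _ _ _ /FV/subsetP sub.
by rewrite !sub // !inE eqxx ?orbT.
Qed.

Lemma subtree_uniq_path x y : x \in V -> y \in V ->
  exists p, [/\ path (edge_rel F) x p, uniq (x :: p), last x p = y
             & all (mem V) (x :: p)].
Proof.
case: tree => _ _ _ conn _ xV yV.
have [p [pr U L]] := connect_uniq_path (conn x y xV yV); exists p; split => //.
elim: p x xV pr {U L} => [|z p IH] x xV; first by rewrite /= xV.
by case/andP=> rxz pr; rewrite /= xV; apply: IH; rewrite ?(subtree_mem rxz).
Qed.

(* The tree path from x to y closes up with the edge xy to a cycle of g,
   which must be the unique cycle. *)
Lemma subtree_missing_edge x y : x \in V -> y \in V -> g x y -> [set x; y] \notin F ->
  [set x; y] \in CE /\ forall e, e \in CE -> e != [set x; y] -> e \in F.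
Proof.
move=> xV yV gxy xyF.
have [p [pr U L _]] := subtree_uniq_path xV yV.
have sp : 1 < size p.
  case: p pr U L => [|z [|w p]] //= => [_ _ E|/andP [rxz _] _ E].
    by move: gxy; rewrite E girr.
  by move: rxz; rewrite /edge_rel E (negbTE xyF).
have E : cycle_edges (x :: p) = CE.
  by apply: (closed_path_cycle_edges subtree_adj) => //; rewrite L gsym.
split; first by rewrite -E set2C -L cycle_edges_last.
move=> e; rewrite -E => /(mem_cycle_edges_path pr U) [->|[a [b [rab ->]]] //].
by rewrite L set2C eqxx.
Qed.

Lemma subtree_missing_edge_unique x y x' y' :
  x \in V -> y \in V -> g x y -> [set x; y] \notin F ->
  x' \in V -> y' \in V -> g x' y' -> [set x'; y'] \notin F ->
  [set x; y] = [set x'; y'].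
Proof.
move=> xV yV gxy xyF xV' yV' gxy' xyF'.
have [_ inF] := subtree_missing_edge xV yV gxy xyF.
have [ce' _] := subtree_missing_edge xV' yV' gxy' xyF'.
by apply/eqP; apply: contraNT xyF' => ne; rewrite inF // eq_sym.
Qed.

Lemma subtree_noncycle_edge x y : x \in V -> y \in V -> g x y ->
  [set x; y] \notin CE -> [set x; y] \in F.
Proof.
move=> xV yV gxy; apply: contraNT => xyF.
by have [] := subtree_missing_edge xV yV gxy xyF.
Qed.

(* w and the tree path joining its two neighbours form the unique cycle. *)
Lemma subtree_outside w x y : w \notin V -> x \in V -> y \in V -> x != y ->
  g w x -> g w y ->
  [/\ [set w; x] \in CE, [set w; y] \in CE & forall z, z \in c0 -> z != w -> z \in V].
Proof.
move=> wV xV yV xy gwx gwy.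
have [p [pr U L pV]] := subtree_uniq_path xV yV.
have wp : w \notin x :: p by apply: contra wV => /(allP pV).
have U' : uniq (w :: x :: p) by rewrite cons_uniq wp U.
have sp : 1 < size (x :: p).
  by case: p {pr U L pV wp U'} => [|? ?] //= in L *; rewrite L eqxx in xy.
have E : cycle_edges (w :: x :: p) = CE.
  apply: (@closed_path_cycle_edges g) => //=;
    by rewrite ?gwx ?(sub_path subtree_adj pr) // L gsym.
split; first by rewrite -E cycle_edges_head.
  by rewrite -E set2C -L (cycle_edges_last U').
move=> z zc zw; have := cycle_edges_next zc; rewrite -E => /mem_cycle_edges /(_ (set21 _ _)).
by rewrite inE (negbTE zw) => /(allP pV).
Qed.

End Subtree.

Lemma connect_del_cycle_edge z : z \in c0 ->
  connect (edge_rel (edges g :\ [set z; next c0 z])) (next c0 z) z.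
Proof.
move=> zc; set F0 := edges g :\ _.
have step x : x \in c0 -> x != z -> edge_rel F0 x (next c0 x).
  move=> xc xz; rewrite /edge_rel in_setD1 mem_edges (next_cycle c0_closed_walk xc) andbT.
  apply: contra_neq xz => /eq_set2 [[-> //]|[xE zE]].
  have c0_size : 2 < size c0 by case/and3P: c0_cycle.
  case/eqP: (next_neq_prev c0_uniq c0_size zc).
  by rewrite -xE -zE prev_next // c0_uniq.
(* The extra arc z -> next z closes the cycle, but a duplicate-free path
   ending at z never leaves z. *)
pose R a b := edge_rel F0 a b || (a == z).
have cR : cycle R c0.
  apply: cycle_from_next c0_uniq _ => x xc; rewrite /R orbC.
  by case: eqVneq => [//|xz]; apply: step.
have nzc : next c0 z \in c0 by rewrite mem_next.
have [p [pr U L]] := connect_uniq_path (connect_cycle cR nzc zc).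
apply/connectP; exists p; rewrite ?L //; apply: (sub_uniq_path U pr) => a b.
by rewrite L /R => az /orP [//|/eqP aeq]; rewrite aeq eqxx in az.
Qed.

Lemma del_cycle_edge_subtree e0 : e0 \in CE -> connected_graph g ->
  is_subtree g setT (edges g :\ e0).
Proof.
case/imsetP=> z zc -> conn; set F0 := edges g :\ _.
have F0g a b : edge_rel F0 a b -> g a b by rewrite /edge_rel in_setD1 mem_edges => /andP [].
split.
- exact: subsetDl.
- by move=> e _; apply: subsetT.
- by apply/set0Pn; exists z; rewrite inE.
- move=> x y _ _; apply: connect_sub (conn x y) => a b gab.
  case: (eqVneq [set a; b] [set z; next c0 z]) => [/eq_set2 [[-> ->]|[-> ->]]|ne].
  + by rewrite (sym_connect_sym (@edge_rel_sym _ F0)) connect_del_cycle_edge.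
  + exact: connect_del_cycle_edge.
  + by apply: connect1; rewrite /edge_rel in_setD1 ne mem_edges.
- move=> c; apply/negP => /and3P [sc uc cyc].
  have ic : is_cycle g c by rewrite /is_cycle sc uc (sub_cycle F0g cyc).
  have := cycle_edges_next zc; rewrite -(c0_unique ic) => /imsetP [w wc E].
  by have := next_cycle cyc wc; rewrite /edge_rel in_setD1 -E eqxx.
Qed.

Lemma deg_del_edge e0 x : e0 \in edges g ->
  deg (edge_rel (edges g :\ e0)) x <= deg g x - (x \in e0).
Proof.
case/edges_set2=> a [b [gab E]].
have sub : [set y | edge_rel (edges g :\ e0) x y] \subset [set y | g x y].
  by apply/subsetP => y; rewrite !inE /edge_rel in_setD1 mem_edges => /andP [].
case: (boolP (x \in e0)) => xe; last by rewrite subn0; apply: subset_leq_card.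
have [o [gxo Eo]] : exists o, g x o /\ e0 = [set x; o].
  by move: xe; rewrite E => /set2P [] ->; [exists b | exists a; rewrite set2C gsym].
have sub2 : [set y | edge_rel (edges g :\ e0) x y] \subset [set y | g x y] :\ o.
  apply/subsetP => y; rewrite !inE /edge_rel in_setD1 mem_edges Eo => /andP [h ->].
  by rewrite andbT; apply: contraNneq h => ->.
apply: leq_trans (subset_leq_card sub2) _.
by rewrite /deg (cardsD1 o [set y | g x y]) inE gxo add1n subn1.
Qed.

Lemma k_proper_coloring_of_cycle_edge k p e0 : e0 \in CE -> connected_graph g ->
  0 < p -> (forall x, deg g x - (x \in e0) <= p) ->
  exists col : {set T} -> 'I_p, k_proper_coloring g k col.
Proof.
move=> e0c conn p_gt0 degp.
have tree := del_cycle_edge_subtree e0c conn; have [_ _ _ _ acyc] := tree.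
have irr : irreflexive (edge_rel (edges g :\ e0)).
  by move=> x; rewrite /edge_rel in_setD1 mem_edges girr andbF.
have e0g : e0 \in edges g.
  by case/imsetP: e0c => z zc ->; rewrite mem_edges (next_cycle c0_closed_walk).
have degF x : deg (edge_rel (edges g :\ e0)) x <= p.
  exact: leq_trans (deg_del_edge x e0g) (degp x).
have [col colP] := forest_proper_coloring p_gt0 irr acyc degF.
by exists col => S _; exists setT, (edges g :\ e0); split => //; apply: subsetT.
Qed.

Lemma cycle_edge_cover D : (exists v, deg g v = D) ->
  #|[set v | deg g v == D]| <= 2 -> (forall v, deg g v = D -> on_cycle g v) ->
  (#|[set v | deg g v == D]| = 2 ->
     forall u v, deg g u = D -> deg g v = D -> u != v -> g u v) ->
  exists2 e0, e0 \in CE & forall w, deg g w = D -> w \in e0.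
Proof.
move=> [v hv] M_le2 Mcyc Madj; set M := [set w | deg g w == D] in M_le2 Madj *.
have vc : v \in c0 by apply/on_cycle_mem/Mcyc.
case: (set_0Vmem (M :\ v)) => [Mv|[u]].
  exists [set v; next c0 v]; first exact: cycle_edges_next.
  move=> w hw; apply: contraT; rewrite !inE negb_or => /andP [wv _].
  have : w \in M :\ v by rewrite !inE wv hw eqxx.
  by rewrite Mv inE.
rewrite !inE => /andP [uv /eqP hu].
have ME : [set u; v] = M.
  apply/eqP; rewrite eqEcard cards2 uv M_le2 andbT.
  by apply/subsetP => w /set2P [] ->; rewrite inE ?hu ?hv.
exists [set u; v]; last by move=> w hw; rewrite ME inE hw.
apply: cycle_adj_cycle_edge; try exact/on_cycle_mem/Mcyc.
by apply: (Madj _ u v); rewrite // -ME cards2 uv.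
Qed.

Definition mono_cycle_pair m (col : {set T} -> 'I_m) v x y :=
  [/\ x != y, g v x, g v y, [set v; y] \in CE & col [set v; x] = col [set v; y]].

Section Obstructions.
Variables (m : nat) (col : {set T} -> 'I_m) (V : {set T}) (F : {set {set T}}).
Hypotheses (tree : is_subtree g V F) (proper : proper_tree col F).

Lemma subtree_noncycle_colors_neq v w1 w2 : v \in V -> w1 \in V -> w2 \in V ->
  w1 != w2 -> g v w1 -> g v w2 -> [set v; w1] \notin CE -> [set v; w2] \notin CE ->
  col [set v; w1] != col [set v; w2].
Proof.
move=> vV w1V w2V w12 g1 g2 n1 n2.
by apply: proper; rewrite // /edge_rel (subtree_noncycle_edge tree).
Qed.

Lemma mono_cycle_pair_notin_subtree v x y : mono_cycle_pair col v x y ->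
  edge_rel F v x -> edge_rel F v y -> False.
Proof. by case=> xy _ _ _ E vx vy; have := proper xy vx vy; rewrite E eqxx. Qed.

Lemma subtree_mono_pairs_in v1 x1 y1 v2 x2 y2 :
  mono_cycle_pair col v1 x1 y1 -> mono_cycle_pair col v2 x2 y2 ->
  v2 \notin [set v1; x1; y1] -> v1 \in V -> x1 \in V -> y1 \in V -> x2 \in V -> False.
Proof.
move=> P1 P2 v2n v1V x1V y1V x2V.
have [n21 n2x n2y] : [/\ v2 != v1, v2 != x1 & v2 != y1].
  by move: v2n; rewrite !inE !negb_or => /andP [/andP [? ?] ?].
case: (P1) => _ gx1 gy1 _ _; case: (P2) => _ gx2 gy2 cy2 _.
(* If an edge v1 z is missing from F, every other cycle edge is in F, and no
   other edge of g inside V can be missing: then v2 carries its pair in F. *)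
have missing z : z \in V -> g v1 z -> [set v1; z] \notin F -> z \in [set x1; y1] -> False.
  move=> zV gz nF zin.
  have v2z : v2 \notin [set v1; z].
    by case/set2P: zin => ->; rewrite !inE negb_or ?n21 ?n2x ?n2y.
  have [_ inF] := subtree_missing_edge tree v1V zV gz nF.
  have hy2 : [set v2; y2] \in F.
    by apply: inF => //; apply: contraNneq v2z => <-; rewrite set21.
  have v2V := (subtree_mem tree hy2).1.
  have hx2 : [set v2; x2] \in F.
    apply: contraNT v2z => nF2.
    by rewrite (subtree_missing_edge_unique tree v1V zV gz nF v2V x2V gx2 nF2) set21.
  exact: mono_cycle_pair_notin_subtree P2 hx2 hy2.
case: (boolP ([set v1; x1] \in F)) => h1; last by apply: (missing x1); rewrite ?set21.
case: (boolP ([set v1; y1] \in F)) => h2; last by apply: (missing y1); rewrite ?set22.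
exact: mono_cycle_pair_notin_subtree P1 h1 h2.
Qed.

Lemma subtree_mono_pairs_out v1 x1 y1 v2 x2 y2 :
  mono_cycle_pair col v1 x1 y1 -> mono_cycle_pair col v2 x2 y2 ->
  v2 \notin [set v1; x1; y1] -> v1 \notin V -> x1 \in V -> y1 \in V -> x2 \in V -> False.
Proof.
move=> P1 P2 v2n v1V x1V y1V x2V.
have [n21 n2x n2y] : [/\ v2 != v1, v2 != x1 & v2 != y1].
  by move: v2n; rewrite !inE !negb_or => /andP [/andP [? ?] ?].
case: (P1) => xy1 gx1 gy1 _ _; case: (P2) => _ gx2 gy2 cy2 _.
have [cx1 cy1 cV] := subtree_outside tree v1V x1V y1V xy1 gx1 gy1.
have v2V : v2 \in V by apply: cV n21; apply: (mem_cycle_edges cy2); rewrite set21.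
(* x1 and y1 are the two cycle neighbours of v1, so y2 = v1 would put v2 among them. *)
have y2V : y2 \in V.
  apply: cV; first by apply: (mem_cycle_edges cy2); rewrite set22.
  apply/eqP => y2v1; move: cy2; rewrite y2v1 set2C => cy2.
  case: (cycle_edge_nbr cy2) => E2; case: (cycle_edge_nbr cx1) => E3;
    case: (cycle_edge_nbr cy1) => E4; rewrite ?E2 ?E3 ?E4 ?eqxx // in n2x n2y xy1.
(* An edge at v2 missing from F would force the cycle edge v1 x1 into F. *)
have inF z : z \in V -> g v2 z -> [set v2; z] \in F.
  move=> zV gz; apply: contraT => nF.
  have [_ inF] := subtree_missing_edge tree v2V zV gz nF.
  have : [set v1; x1] \in F.
    apply: inF => //; apply: contraNneq n21 => E.
    have : v2 \in [set v1; x1] by rewrite E set21.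
    by rewrite !inE (negbTE n2x) orbF.
  by move=> h; move: v1V; rewrite (subtree_mem tree h).1.
exact: mono_cycle_pair_notin_subtree P2 (inF _ x2V gx2) (inF _ y2V gy2).
Qed.

(* At most one edge of a triangle can be missing from a subtree, so some
   vertex of the triangle has both its triangle edges in F. *)
Lemma subtree_mono_triangle a b c : a != b -> b != c -> a != c ->
  g a b -> g b c -> g a c ->
  col [set a; b] = col [set a; c] -> col [set b; a] = col [set b; c] ->
  col [set c; a] = col [set c; b] -> a \in V -> b \in V -> c \in V -> False.
Proof.
move=> ab bc ac gab gbc gac Ea Eb Ec aV bV cV.
have conflict x y z : y != z -> edge_rel F x y -> edge_rel F x z ->
    col [set x; y] = col [set x; z] -> False.
  by move=> yz xy xz E; have := proper yz xy xz; rewrite E eqxx.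
have unique x y x' y' := @subtree_missing_edge_unique _ _ tree x y x' y'.
have ne_ab_bc : [set a; b] != [set b; c] by rewrite set2C set2_neq // eq_sym.
have ne_ac_bc : [set a; c] != [set b; c].
  by rewrite set2C [[set b; c]]set2C set2_neq // eq_sym.
case: (boolP ([set a; b] \in F)) => hab; case: (boolP ([set a; c] \in F)) => hac.
- exact: (conflict a b c).
- have hbc : [set b; c] \in F.
    by apply: contraNT ne_ac_bc => nbc; apply/eqP; apply: unique.
  by apply: (conflict b a c) => //; rewrite /edge_rel set2C.
- have hbc : [set b; c] \in F.
    by apply: contraNT ne_ab_bc => nbc; apply/eqP; apply: unique.
  by apply: (conflict c a b); rewrite // /edge_rel set2C.
- by case/eqP: (set2_neq (adj_neq gab) bc); apply: unique.
Qed.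

Lemma subtree_mono_bridge v u1 u2 c1 c2 : c1 != c2 ->
  g v u1 -> g v u2 -> g v c1 -> g v c2 ->
  [set v; u1] \notin CE -> [set v; u2] \notin CE ->
  [set v; c1] \in CE -> [set v; c2] \in CE ->
  col [set v; c1] = col [set v; u1] -> col [set v; c2] = col [set v; u2] ->
  u1 \in V -> u2 \in V -> c1 \in V -> False.
Proof.
move=> c12 gu1 gu2 gc1 gc2 nu1 nu2 cc1 cc2 E1 E2 u1V u2V c1V.
have c1u1 : c1 != u1 by apply: contraNneq nu1 => <-.
have c2u2 : c2 != u2 by apply: contraNneq nu2 => <-.
have vV : v \in V.
  apply: contraNT nu1 => vV.
  by have [] := subtree_outside tree vV u1V c1V _ gu1 gc1; rewrite // eq_sym.
have hu1 := subtree_noncycle_edge tree vV u1V gu1 nu1.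
case: (boolP ([set v; c1] \in F)) => hc1.
  by have := proper c1u1 hc1 hu1; rewrite E1 eqxx.
have [_ inF] := subtree_missing_edge tree vV c1V gc1 hc1.
have hc2 : [set v; c2] \in F.
  by apply: inF => //; apply: set2_neq; [exact: adj_neq | rewrite eq_sym].
have hu2 := subtree_noncycle_edge tree vV u2V gu2 nu2.
have c2V := (subtree_mem tree hc2).2.
by have := proper c2u2 hc2 hu2; rewrite E2 eqxx.
Qed.

End Obstructions.

Lemma cycle_nbrs_card_le2 v : #|[set w | g v w & [set v; w] \in CE]| <= 2.
Proof.
apply: leq_trans (_ : #|[set next c0 v; prev c0 v]| <= 2); last first.
  by rewrite cards2; case: (_ != _).
apply: subset_leq_card; apply/subsetP => w; rewrite !inE => /andP [_].
by case/cycle_edge_nbr => ->; rewrite eqxx ?orbT.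
Qed.

Section LowerBound.
Variables (k m : nat) (col : {set T} -> 'I_m).
Hypotheses (hk : 3 <= k <= #|T|) (kproper : k_proper_coloring g k col).

Lemma proper_subtree3 a b c : exists V F,
  [/\ is_subtree g V F, proper_tree col F, a \in V, b \in V & c \in V].
Proof.
case/andP: hk => k3 kT.
have [|S abcS cS] := @exists_superset_card _ [set a; b; c] k.
  by rewrite kT andbT (leq_trans (card_set3_le a b c) k3).
have [V [F [tree SV proper]]] := kproper cS.
have abcV := subsetP (subset_trans abcS SV).
by exists V, F; split; rewrite // abcV // !inE eqxx ?orbT.
Qed.

Lemma noncycle_colors_neq v w1 w2 : w1 != w2 -> g v w1 -> g v w2 ->
  [set v; w1] \notin CE -> [set v; w2] \notin CE -> col [set v; w1] != col [set v; w2].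
Proof.
move=> w12 g1 g2 n1 n2; have [V [F [tree proper vV w1V w2V]]] := proper_subtree3 v w1 w2.
exact: (subtree_noncycle_colors_neq tree proper).
Qed.

Lemma mono_cycle_pair_of_deg v : m < deg g v -> exists x y, mono_cycle_pair col v x y.
Proof.
move=> ltm; set N := [set w | g v w]; pose f w := col [set v; w].
case: (boolP [exists w1 in N, exists w2 in N, (w1 != w2) && (f w1 == f w2)]); last first.
  move=> noclash; have inj : {in N &, injective f}.
    move=> a b aN bN fab; apply/eqP; apply: contraNT noclash => ab.
    by apply/exists_inP; exists a => //; apply/exists_inP; exists b; rewrite // ab fab eqxx.
  by have := max_card (mem (f @: N)); rewrite card_in_imset // card_ord leqNgt ltm.
case/exists_inP => w1; rewrite inE => g1.
case/exists_inP => w2; rewrite inE => g2 /andP [w12 /eqP fE].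
case: (boolP ([set v; w2] \in CE)) => c2; first by exists w1, w2.
case: (boolP ([set v; w1] \in CE)) => c1; first by exists w2, w1; split; rewrite // eq_sym.
by have := noncycle_colors_neq w12 g1 g2 c1 c2; rewrite [col _]fE eqxx.
Qed.

Lemma no_far_mono_cycle_pairs v1 x1 y1 v2 x2 y2 :
  mono_cycle_pair col v1 x1 y1 -> mono_cycle_pair col v2 x2 y2 ->
  v2 \notin [set v1; x1; y1] -> False.
Proof.
move=> P1 P2 v2n; have [V [F [tree proper x1V y1V x2V]]] := proper_subtree3 x1 y1 x2.
case: (boolP (v1 \in V)) => v1V.
  exact: (subtree_mono_pairs_in tree proper P1 P2 v2n).
exact: (subtree_mono_pairs_out tree proper P1 P2 v2n).
Qed.

(* With deg v = m + 2, the m non-cycle edges at v use every color, so each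
   of the two cycle edges at v repeats the color of a non-cycle edge. *)
Lemma deg_le_colors_succ v : deg g v <= m.+1.
Proof.
set U := [set w | g v w & [set v; w] \notin CE].
set C := [set w | g v w & [set v; w] \in CE].
pose f w := col [set v; w].
have degE : deg g v = #|C| + #|U|.
  rewrite /deg -(cardsID [set w | [set v; w] \in CE] [set w | g v w]).
  by congr (_ + _); apply: eq_card => w; rewrite !inE andbC.
have inj : {in U &, injective f}.
  move=> a b; rewrite !inE => /andP [ga na] /andP [gb nb] fab.
  apply/eqP/negPn/negP => ab.
  by have := noncycle_colors_neq ab ga gb na nb; rewrite [col _]fab eqxx.
have U_le : #|U| <= m by have := max_card (mem (f @: U)); rewrite card_in_imset // card_ord.
rewrite degE leqNgt; apply/negP => big.
have C_le : #|C| <= 2 := cycle_nbrs_card_le2 v.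
have /cards2P [c1 [c2 [c12 CE2]]] : #|C| == 2 by lia.
have surj : f @: U = setT.
  by apply/eqP; rewrite eqEcard subsetT cardsT card_ord card_in_imset //; lia.
have [u1 u1U fu1] : exists2 u, u \in U & f c1 = f u by apply/imsetP; rewrite surj inE.
have [u2 u2U fu2] : exists2 u, u \in U & f c2 = f u by apply/imsetP; rewrite surj inE.
have : (c1 \in C) && (c2 \in C) by rewrite CE2 set21 set22.
rewrite !inE => /andP [/andP [gc1 cc1] /andP [gc2 cc2]].
move: u1U u2U; rewrite !inE => /andP [gu1 nu1] /andP [gu2 nu2].
have [V [F [tree proper u1V u2V c1V]]] := proper_subtree3 u1 u2 c1.
exact: (subtree_mono_bridge tree proper c12 gu1 gu2 gc1 gc2 nu1 nu2 cc1 cc2 fu1 fu2).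
Qed.

Lemma high_deg_on_cycle v : m < deg g v -> v \in c0.
Proof.
case/mono_cycle_pair_of_deg=> x [y [_ _ _ cy _]].
by apply: (mem_cycle_edges cy); rewrite set21.
Qed.

Lemma high_deg_mono_cycle_pair u x y v : mono_cycle_pair col u x y ->
  m < deg g v -> v != u -> v \in [set x; y].
Proof.
move=> P hv vu; apply/negPn/negP => vxy.
have [x' [y' P']] := mono_cycle_pair_of_deg hv.
by apply: (no_far_mono_cycle_pairs P P'); move: vxy; rewrite !inE !negb_or vu.
Qed.

Lemma high_deg_adj u v : m < deg g u -> m < deg g v -> u != v -> g u v.
Proof.
move=> hu hv uv; have [x [y P]] := mono_cycle_pair_of_deg hu.
case: (P) => _ gx gy _ _.
have vu : v != u by rewrite eq_sym.
by case/set2P: (high_deg_mono_cycle_pair P hv vu) => ->.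
Qed.

Lemma high_deg_same_color a b c : m < deg g a -> m < deg g b -> m < deg g c ->
  a != b -> b != c -> c != a -> col [set a; b] = col [set a; c].
Proof.
move=> ha hb hc ab bc ca; have [x [y P]] := mono_cycle_pair_of_deg ha.
have ba : b != a by rewrite eq_sym.
have := high_deg_mono_cycle_pair P hb ba; have := high_deg_mono_cycle_pair P hc ca.
case: P => _ _ _ _ E.
by case/set2P => ->; case/set2P => ->; rewrite ?eqxx // in bc.
Qed.

Lemma high_deg_card_le2 D : m < D -> #|[set v | deg g v == D]| <= 2.
Proof.
move=> ltmD; rewrite leqNgt; apply/negP => /card_gt2P [a [b [c [[]]]]].
rewrite !inE => /eqP ha /eqP hb /eqP hc [ab bc ca].
have [{}ha {}hb {}hc] : [/\ m < deg g a, m < deg g b & m < deg g c] by rewrite ha hb hc.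
have [ba cb ac] : [/\ b != a, c != b & a != c] by split; rewrite eq_sym.
have [V [F [tree proper aV bV cV]]] := proper_subtree3 a b c.
apply: (subtree_mono_triangle tree proper ab bc ac) => //;
  by [exact: high_deg_adj | exact: high_deg_same_color].
Qed.

Lemma few_colors_degree_conditions D : m < D ->
  [/\ #|[set v | deg g v == D]| <= 2,
      (forall v, deg g v = D -> on_cycle g v)
    & (#|[set v | deg g v == D]| = 2 ->
         forall u v, deg g u = D -> deg g v = D -> u != v -> g u v)].
Proof.
move=> ltmD; split; first exact: high_deg_card_le2.
  by move=> v hv; apply/on_cycle_mem/high_deg_on_cycle; rewrite hv.
by move=> _ u v hu hv; apply: high_deg_adj; rewrite ?hu ?hv.
Qed.

End LowerBound.
End Unicyclic.

Theorem mainTheorem13 (T : finType) (g : rel T) (k : nat) :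
  simple_graph g -> unicyclic g -> 3 <= #|T| -> 3 <= k <= #|T| ->
  let D := maxdeg g in
  let cond :=
    [/\ #|[set v | deg g v == D]| <= 2,
        (forall v, deg g v = D -> on_cycle g v)
      & (#|[set v | deg g v == D]| = 2 ->
           forall u v, deg g u = D -> deg g v = D -> u != v -> g u v)] in
  (cond -> is_px g k (D - 1)) /\ (~ cond -> is_px g k D).
Proof.
move=> [gsym girr] [conn [c0 [c0_cycle c0_unique]]] T3 hk D cond.
have degD v : deg g v <= D by apply: leq_bigmax.
have [z0 z0c] : exists z, z \in c0.
  by case/and3P: c0_cycle; case: (c0) => [|z ?] // _ _ _; exists z; rewrite mem_head.
have D_ge2 : 2 <= D := leq_trans (cycle_deg_ge2 gsym c0_cycle z0c) (degD z0).
have [vD vDE] : exists v, deg g v = D.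
  by have [v E] := eq_bigmax (deg g) (ltnW (ltnW T3)); exists v; rewrite /D /maxdeg E.
have upper p e0 := @k_proper_coloring_of_cycle_edge _ _ gsym girr _ c0_cycle c0_unique k p e0.
split=> [[Dle2 Dcyc Dadj] | notcond]; split.
- have [e0 e0c cover] :=
    cycle_edge_cover gsym girr c0_cycle c0_unique (ex_intro _ vD vDE) Dle2 Dcyc Dadj.
  apply: (upper _ _ e0c conn); first by rewrite subn_gt0.
  move=> x; have := degD x; case: (boolP (x \in e0)) => xe; first by lia.
  have : deg g x != D by apply: contraNneq xe => /cover.
  lia.
- move=> m col kp.
  by have := deg_le_colors_succ gsym girr c0_cycle c0_unique hk kp vD; rewrite vDE; lia.
- apply: (upper _ _ (cycle_edges_next z0c) conn); first by lia.
  by move=> x; have := degD x; lia.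
- move=> m col kp; rewrite leqNgt; apply/negP => ltmD; apply: notcond.
  exact: (few_colors_degree_conditions gsym girr c0_cycle c0_unique hk kp ltmD).
Qed.
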